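(* Let $m\ge2$, $0\le s\le m$, $j,k\in\{1,\dots,m\}$. Denote by $\hat\lambda=(\lambda_1,\dots,\lambda_{j-1},\lambda_{j+1},\dots,\lambda_m)$ and $\hat\xi=(\xi_1,\dots,\xi_{k-1},\xi_{k+1},\dots,\xi_m)$. Then, at $\lambda_j=\xi_k-i\zeta/2$: (i) if $j>s$ (i.e. $\epsilon_j=\tfrac12$), $$\tilde G_s(m,\{\lambda_l\}|\{\xi_l\})\Big|_{\lambda_j=\xi_k-i\zeta/2}=\prod_{a\neq k}\sinh(\lambda_j-\xi_a-i\tfrac\zeta2)\prod_{a\ne j}\sinh(\lambda_a-\xi_k-i\tfrac\zeta2)\;\tilde G_s(m-1,\hat\lambda|\hat\xi);$$ (ii) if $j\le s$ (i.e. $\epsilon_j=-\tfrac12$), $$\tilde G_s(m,\{\lambda_l\}|\{\xi_l\})\Big|_{\lambda_j=\xi_k-i\zeta/2}=\prod_{a\neq k}\sinh(\lambda_j-\xi_a-i\tfrac\zeta2)\prod_{a\ne j}\sinh(\lambda_a-\xi_k-i\tfrac\zeta2)\;\tilde G_{s-1}(m-1,\hat\lambda|\hat\xi).$$ In both cases the $m-1$ remaining $\lambda$'s keep their original order (so the first $s$, resp. $s-1$, of them are those with $\epsilon=-\tfrac12$).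
   Context: Fix $\zeta\in(0,\pi)$. For integers $m\ge1$, $0\le s\le m$, set $\epsilon_j=-\tfrac12$ for $j\le s$ and $\epsilon_j=+\tfrac12$ for $j>s$ ($\epsilon_j$ attached to $\lambda_j$). Define $$G_s(m,\{\lambda_j\}|\{\xi_k\})=\frac{1}{s!(m-s)!}\sum_{\sigma\in S_m}(-1)^{[\sigma]}\prod_{1\le k<j\le m}\frac{\sinh(\lambda_{\sigma(j)}-\xi_k+i\epsilon_{\sigma(j)}\zeta)\,\sinh(\lambda_{\sigma(k)}-\xi_j-i\epsilon_{\sigma(k)}\zeta)}{\sinh(\lambda_{\sigma(j)}-\lambda_{\sigma(k)}+i(\epsilon_{\sigma(j)}+\epsilon_{\sigma(k)})\zeta)}$$ ($(-1)^{[\sigma]}$ the sign of $\sigma$), and define $\tilde G_s$ by $$G_s(m,\{\lambda_j\}|\{\xi_k\})=\frac{1}{s!(m-s)!}\prod_{1\le k<j\le m}\frac{\sinh(\lambda_j-\lambda_k)}{\sinh(\lambda_j-\lambda_k+i(\epsilon_j+\epsilon_k)\zeta)\,\sinh(\lambda_j-\lambda_k-i(\epsilon_j+\epsilon_k)\zeta)}\;\tilde G_s(m,\{\lambda_j\}|\{\xi_k\}),$$ as meromorphic functions (removable singularities extended by continuity). In particular $\tilde G_0(1,\lambda_1|\xi_1)=\tilde G_1(1,\lambda_1|\xi_1)=1$. *)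

From mathcomp Require Import all_boot all_order all_algebra all_fingroup.
From mathcomp Require Import reals sequences exp trigo.
From mathcomp Require Import complex.
Set Implicit Arguments. Unset Strict Implicit. Unset Printing Implicit Defensive.
Import Order.TTheory GRing.Theory Num.Theory.
Local Open Scope ring_scope.
Local Open Scope complex_scope.

Section Defs.
Variable R : realType.
Local Notation C := R[i].

Definition cexp (z : C) : C :=
  let: a +i* b := z in (expR a * cos b) +i* (expR a * sin b).

Definition csinh (z : C) : C := (cexp z - cexp (- z)) / 2.

(* Indices are 0-based: lambda_1..lambda_m of the paper are lam 0 .. lam (m-1).
   eps s a = -1/2 if a < s (i.e. paper index a+1 <= s), +1/2 otherwise. *)
Definition eps (s a : nat) : C := if (a < s)%N then - (1 / 2) else 1 / 2.

Definition izeta (zeta : R) : C := 'i * zeta%:C.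

Definition Gs (zeta : R) (s m : nat) (lam xi : nat -> C) : C :=
  (((s`! * (m - s)`!)%N)%:R)^-1 *
  \sum_(sg : 'S_m) ((-1) ^+ sg *
    \prod_(k < m) \prod_(j < m | (k < j)%N)
      (csinh (lam (sg j) - xi k + eps s (sg j) * izeta zeta)
       * csinh (lam (sg k) - xi j - eps s (sg k) * izeta zeta)
       / csinh (lam (sg j) - lam (sg k) + (eps s (sg j) + eps s (sg k)) * izeta zeta))).

(* tilde G_s(m, {lam} | {xi}), defined from
   G_s = 1/(s!(m-s)!) * prod_{k<j} sinh(l_j-l_k) /
         (sinh(l_j-l_k+i(e_j+e_k)z) sinh(l_j-l_k-i(e_j+e_k)z)) * tilde G_s ,
   valid wherever the denominators do not vanish (see [generic]). *)
Definition tGs (zeta : R) (s m : nat) (lam xi : nat -> C) : C :=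
  ((s`! * (m - s)`!)%N)%:R * Gs zeta s m lam xi *
  \prod_(k < m) \prod_(j < m | (k < j)%N)
    (csinh (lam j - lam k + (eps s j + eps s k) * izeta zeta)
     * csinh (lam j - lam k - (eps s j + eps s k) * izeta zeta)
     / csinh (lam j - lam k)).

Definition generic (zeta : R) (s m : nat) (lam : nat -> C) : Prop :=
  forall a b : nat, (a < m)%N -> (b < m)%N -> a <> b ->
    csinh (lam a - lam b) <> 0 /\
    csinh (lam a - lam b + (eps s a + eps s b) * izeta zeta) <> 0.

Definition hat (j : nat) (f : nat -> C) : nat -> C :=
  fun a => if (a < j)%N then f a else f a.+1.

End Defs.

From Pilot Require Import Defs.
From mathcomp Require Import all_boot all_order all_algebra all_fingroup.
From mathcomp Require Import reals sequences exp trigo.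
From mathcomp Require Import complex boolp.
From mathcomp Require Import ring zify.
Import Order.TTheory GRing.Theory Num.Theory.
Local Open Scope ring_scope.
Local Open Scope complex_scope.
Set Implicit Arguments. Unset Strict Implicit. Unset Printing Implicit Defensive.

(* Up to the factor s!(m-s)!, G_s is an alternating sum over S_m of products over
   the pairs k < j, and tilde G_s is that sum times the normalising product N of the
   definition.  The identity
     sinh(A-x) sinh(B-y) - sinh(A-y) sinh(B-x) = sinh(A-B) sinh(x-y)
   makes the alternating sum invariant under swapping two adjacent xi's, so xi_k can
   be moved to the first position (if eps_j = 1/2) or to the last one (if
   eps_j = -1/2).  At lambda_j = xi_k - i zeta/2 the factor
   sinh(lambda_j - xi_k + i eps_j zeta) of that position then vanishes unless sigma
   sends it to j; the surviving permutations are lifts of permutations of m-1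
   letters and give the alternating sum of the reduced data, while the leftover
   factors, combined with the j-th row of N, are the two products of the statement. *)

Section ComplexSinh.
Variable R : realType.
Local Notation C := R[i].

Lemma cexpD (z w : C) : cexp (z + w) = cexp z * cexp w.
Proof.
case: z => a b; case: w => c d; rewrite /cexp /= expRD cosD sinD.
by apply/eqP; rewrite eq_complex /=; apply/andP; split; apply/eqP; ring.
Qed.

Lemma cexp0 : cexp (0 : C) = 1.
Proof. by rewrite /cexp /= expR0 cos0 sin0 mul1r mulr0. Qed.

Lemma cexp_neq0 (z : C) : cexp z != 0.
Proof.
apply/eqP => z0; have := cexpD z (- z).
by rewrite subrr cexp0 z0 mul0r => /eqP; rewrite oner_eq0.
Qed.

Lemma cexpN (z : C) : cexp (- z) = (cexp z)^-1.
Proof.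
apply: (mulfI (cexp_neq0 z)).
by rewrite -cexpD subrr cexp0 mulfV ?cexp_neq0.
Qed.

Lemma csinhE (z : C) : csinh z = (cexp z - (cexp z)^-1) / 2.
Proof. by rewrite /csinh cexpN. Qed.

Lemma csinhN (z : C) : csinh (- z) = - csinh z.
Proof. by rewrite !csinhE cexpN invrK -mulNr opprB. Qed.

Lemma csinh0 : csinh (0 : C) = 0.
Proof. by rewrite csinhE cexp0 invr1 subrr mul0r. Qed.

Lemma csinh_exchange (A B x y : C) :
  csinh (A - x) * csinh (B - y) - csinh (A - y) * csinh (B - x)
  = csinh (A - B) * csinh (x - y).
Proof.
rewrite !csinhE !cexpD !cexpN.
have := cexp_neq0 A; have := cexp_neq0 B; have := cexp_neq0 x; have := cexp_neq0 y.
have two_neq0 : (2 : C) != 0 by rewrite pnatr_eq0.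
move=> ny nx nB nA; field; by rewrite ?nA ?nB ?nx ?ny ?two_neq0.
Qed.

End ComplexSinh.

Section AlternatingPairProduct.
Variables (F : numFieldType) (m : nat).
Variables (f g : nat -> F -> F) (h : nat -> nat -> F).

Definition pair_term (X : 'I_m -> F) (sg : 'S_m) (p : 'I_m * 'I_m) : F :=
  f (sg p.2) (X p.1) * g (sg p.1) (X p.2) / h (sg p.2) (sg p.1).

Definition pair_prod (X : 'I_m -> F) (sg : 'S_m) : F :=
  \prod_(k < m) \prod_(j < m | (k < j)%N) pair_term X sg (k, j).

Definition alt_pair_sum (X : 'I_m -> F) : F :=
  \sum_(sg : 'S_m) (-1) ^+ sg * pair_prod X sg.

Variables (i0 i1 : 'I_m).
Hypothesis i1E : val i1 = (val i0).+1.
Local Notation t := (tperm i0 i1).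

Lemma tperm_adj_val (a : 'I_m) : val (t a) =
  if val a == val i0 then val i1 else if val a == val i1 then val i0 else val a.
Proof.
case: tpermP => [->|->|a0 a1]; rewrite ?eqxx //.
- by rewrite i1E (_ : ((val i0).+1 == val i0) = false) ?eqxx //; lia.
- have /negbTE -> : val a != val i0 by apply/eqP => /val_inj.
  by have /negbTE -> : val a != val i1 by apply/eqP => /val_inj.
Qed.

Definition other_pair (p : 'I_m * 'I_m) :=
  (p.1 < p.2)%N && ~~ ((val p.1 == val i0) && (val p.2 == val i1)).

Definition tperm_pair (b1 b2 : bool) (p : 'I_m * 'I_m) :=
  (if b1 then t p.1 else p.1, if b2 then t p.2 else p.2).

Lemma tperm_pairK b1 b2 : involutive (tperm_pair b1 b2).
Proof. by case: b1; case: b2; case=> a b; rewrite /tperm_pair /= ?tpermK. Qed.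

Lemma other_pair_tperm b1 b2 p : other_pair (tperm_pair b1 b2 p) = other_pair p.
Proof.
rewrite /other_pair /tperm_pair /=; case: b1; case: b2; rewrite ?tperm_adj_val //=;
  move: i1E; case: p => [[a ?] [b ?]] /=; case: i0 i1 => [c ?] [d ?] /= ->;
  by case: (a =P c) => ?; case: (a =P c.+1) => ?; case: (b =P c) => ?;
     case: (b =P c.+1) => ? /=; lia.
Qed.

Lemma prod_other_pair_tperm b1 b2 (G : 'I_m * 'I_m -> F) :
  \prod_(p | other_pair p) G (tperm_pair b1 b2 p) = \prod_(p | other_pair p) G p.
Proof.
rewrite [RHS](reindex_inj (inv_inj (tperm_pairK b1 b2))).
by apply: eq_bigl => p; rewrite other_pair_tperm.
Qed.

Lemma prod_other_pair_tpermX X sg :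
  \prod_(p | other_pair p) pair_term (X \o t) sg p =
  \prod_(p | other_pair p) pair_term X sg p.
Proof.
rewrite /pair_term !big_split !prodfV /=.
rewrite (prod_other_pair_tperm true false (fun p => f (sg p.2) (X p.1))).
by rewrite (prod_other_pair_tperm false true (fun p => g (sg p.1) (X p.2))).
Qed.

Lemma prod_other_pair_tpermM X sg :
  \prod_(p | other_pair p) pair_term X (t * sg)%g p =
  \prod_(p | other_pair p) pair_term X sg p.
Proof.
rewrite /pair_term !big_split !prodfV /=.
under eq_bigr do rewrite permM.
under [X in _ * X / _]eq_bigr do rewrite permM.
under [X in _ / X]eq_bigr do rewrite !permM.
rewrite (prod_other_pair_tperm false true (fun p => f (sg p.2) (X p.1))).
rewrite (prod_other_pair_tperm true false (fun p => g (sg p.1) (X p.2))).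
by rewrite (prod_other_pair_tperm true true (fun p => h (sg p.2) (sg p.1))).
Qed.

Lemma pair_prod_split X sg :
  pair_prod X sg = pair_term X sg (i0, i1) * \prod_(p | other_pair p) pair_term X sg p.
Proof.
by rewrite /pair_prod pair_big_dep (bigD1 (i0, i1)) //= i1E ltnSn.
Qed.

Hypothesis exchange_sym : forall x y (a b : 'I_m), a != b ->
  (f a x * g b y - f a y * g b x) / h a b = (f b x * g a y - f b y * g a x) / h b a.

(* Only the factor of the pair (i0, i1) feels the swap; by [exchange_sym] the
   difference of the two sums is odd under [sg |-> t * sg], hence zero. *)
Lemma alt_pair_sum_tperm X : alt_pair_sum X = alt_pair_sum (X \o t).
Proof.
apply/eqP; rewrite -subr_eq0 /alt_pair_sum -sumrB; apply/eqP.
pose D (sg : 'S_m) := (-1) ^+ sg * pair_prod X sg - (-1) ^+ sg * pair_prod (X \o t) sg.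
rewrite -/(\sum_sg D sg).
have DtN sg : D (t * sg)%g = - D sg.
  have i01 : i0 != i1 by rewrite -val_eqE i1E neq_ltn ltnSn.
  rewrite /D -!mulrBr !pair_prod_split !prod_other_pair_tpermX prod_other_pair_tpermM.
  rewrite odd_permM odd_tperm i01 signr_addb -!mulrBl expr1 mulN1r mulNr.
  congr (- (_ * (_ * _))); rewrite /pair_term /= !permM tpermL tpermR.
  by apply: exchange_sym; apply: contraNneq i01 => /perm_inj ->.
have : \sum_sg D sg = - \sum_sg D sg.
  by rewrite {1}(reindex_inj (mulgI t)) /= -sumrN; apply: eq_bigr => sg _; rewrite DtN.
move/eqP; rewrite -subr_eq0 opprK -mulr2n -mulr_natr mulf_eq0 pnatr_eq0 orbF.
by move/eqP.
Qed.

End AlternatingPairProduct.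

Section UnliftPerm.
Variable n : nat.

Definition unlift_perm_fun (i : 'I_n.+1) (s : 'S_n.+1) (k : 'I_n) : 'I_n :=
  odflt k (unlift (s i) (s (lift i k))).

Lemma unlift_perm_funK i (s : 'S_n.+1) k :
  lift (s i) (unlift_perm_fun i s k) = s (lift i k).
Proof.
rewrite /unlift_perm_fun; have := neq_lift i k.
by rewrite -(inj_eq (@perm_inj _ s)) => /unlift_some[k' -> ->].
Qed.

Lemma unlift_perm_fun_inj i (s : 'S_n.+1) : injective (unlift_perm_fun i s).
Proof.
move=> k1 k2 /(congr1 (lift (s i))); rewrite !unlift_perm_funK.
by move/perm_inj/lift_inj.
Qed.

Definition unlift_perm i (s : 'S_n.+1) : 'S_n := perm (@unlift_perm_fun_inj i s).

Lemma lift_permK i j : cancel (lift_perm i j) (unlift_perm i).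
Proof.
move=> s; apply/permP => k; apply: (@lift_inj _ j).
by rewrite permE -{1}(lift_perm_id i j s) unlift_perm_funK lift_perm_lift.
Qed.

Lemma unlift_permK i j (s : 'S_n.+1) : s i = j -> lift_perm i j (unlift_perm i s) = s.
Proof.
move=> sij; apply/permP => k; case: (unliftP i k) => [k'|] ->.
  by rewrite lift_perm_lift permE -sij unlift_perm_funK.
by rewrite lift_perm_id sij.
Qed.

Lemma big_perm_lift (T : Type) (idx : T) (op : Monoid.com_law idx) i j
    (G : 'S_n.+1 -> T) :
  \big[op/idx]_(s : 'S_n.+1 | s i == j) G s = \big[op/idx]_(r : 'S_n) G (lift_perm i j r).
Proof.
rewrite (reindex_onto (lift_perm i j) (unlift_perm i)) => [|s /eqP]; last first.
  exact: unlift_permK.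
by apply: eq_bigl => r; rewrite lift_perm_id lift_permK !eqxx.
Qed.

End UnliftPerm.

Section AltPairSumExpansion.
Variables (F : numFieldType) (n : nat).
Variables (f g : nat -> F -> F) (h : nat -> nat -> F) (j : 'I_n.+1).

Let fj a := f (bump j a).
Let gj a := g (bump j a).
Let hj a b := h (bump j a) (bump j b).

Lemma pair_prod_first_eq0 (X : 'I_n.+1 -> F) (sg : 'S_n.+1) :
  f j (X ord0) = 0 -> sg ord0 != j -> pair_prod f g h X sg = 0.
Proof.
move=> f0 sg0; pose p := (sg^-1)%g j.
have p_gt0 : (0 < p)%N.
  rewrite lt0n; apply: contraNneq sg0 => p0.
  by rewrite (_ : ord0 = p) ?permKV //; apply: val_inj.
rewrite /pair_prod (bigD1 ord0) //= (bigD1 p) //= /pair_term /= permKV f0.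
by rewrite !mul0r.
Qed.

Lemma pair_prod_lift_first (X : 'I_n.+1 -> F) (rho : 'S_n) :
  pair_prod f g h X (lift_perm ord0 j rho) =
  (\prod_(q < n) g j (X (lift ord0 q))) *
  (\prod_(a < n) (f (lift j a) (X ord0) / h (lift j a) j)) *
  pair_prod fj gj hj (fun q => X (lift ord0 q)) rho.
Proof.
rewrite /pair_prod big_ord_recl big_mkcond big_ord_recl /= mul1r.
congr (_ * _).
  rewrite /pair_term /= lift_perm_id.
  under eq_bigr => q _ do rewrite lift_perm_lift mulrAC.
  rewrite big_split mulrC; congr (_ * _).
  by rewrite [RHS](reindex_inj (@perm_inj _ rho)).
apply: eq_bigr => k _; rewrite big_mkcond big_ord_recl /= mul1r [RHS]big_mkcond.
apply: eq_bigr => l _; rewrite (_ : (lift ord0 k < lift ord0 l)%N = (k < l)%N) //.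
by case: ifP => // _; rewrite /pair_term /= !lift_perm_lift.
Qed.

Lemma alt_pair_sum_first (X : 'I_n.+1 -> F) :
  f j (X ord0) = 0 ->
  alt_pair_sum f g h X =
  (-1) ^+ j * (\prod_(q < n) g j (X (lift ord0 q))) *
  (\prod_(a < n) (f (lift j a) (X ord0) / h (lift j a) j)) *
  alt_pair_sum fj gj hj (fun q => X (lift ord0 q)).
Proof.
move=> f0; rewrite /alt_pair_sum (bigID (fun sg : 'S_n.+1 => sg ord0 == j)) /=.
rewrite [X in _ + X]big1 ?addr0 => [|sg sg0]; last first.
  by rewrite pair_prod_first_eq0 ?mulr0.
rewrite big_perm_lift big_distrr /=; apply: eq_bigr => rho _.
rewrite pair_prod_lift_first odd_lift_perm 2!signr_addb !signr_odd expr0 mul1r.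
move: ((-1) ^+ j) ((-1) ^+ rho) (\prod_(q < n) _) (\prod_(a < n) _) (pair_prod _ _ _ _ rho).
by move=> sj sr A B P; ring.
Qed.

Lemma pair_prod_last_eq0 (X : 'I_n.+1 -> F) (sg : 'S_n.+1) :
  g j (X ord_max) = 0 -> sg ord_max != j -> pair_prod f g h X sg = 0.
Proof.
move=> g0 sgn; pose p := (sg^-1)%g j.
have p_lt : (p < n)%N.
  have := ltn_ord p; rewrite ltnS leq_eqVlt => /orP [/eqP pn|//].
  by move: sgn; rewrite (_ : ord_max = p) ?permKV ?eqxx //; apply: val_inj.
rewrite /pair_prod (bigD1 p) //= (bigD1 ord_max) //= /pair_term /= permKV g0.
by rewrite mulr0 !mul0r.
Qed.

Lemma pair_prod_lift_last (X : 'I_n.+1 -> F) (rho : 'S_n) :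
  pair_prod f g h X (lift_perm ord_max j rho) =
  (\prod_(q < n) f j (X (lift ord_max q))) *
  (\prod_(a < n) (g (lift j a) (X ord_max) / h j (lift j a))) *
  pair_prod fj gj hj (fun q => X (lift ord_max q)) rho.
Proof.
have liftE q : lift ord_max q = widen_ord (leqnSn n) q by apply: val_inj; exact: lift_max.
rewrite /pair_prod big_ord_recr /= [X in _ * X]big_pred0 => [|l]; last first.
  by rewrite ltnNge leq_ord.
rewrite mulr1.
under eq_bigr => k _ do rewrite big_mkcond big_ord_recr /= -liftE ltn_ord.
rewrite big_split /= mulrC; congr (_ * _).
  rewrite /pair_term /=.
  under eq_bigr => q _ do rewrite lift_perm_id lift_perm_lift -mulrA.
  rewrite big_split; congr (_ * _).
  by rewrite [RHS](reindex_inj (@perm_inj _ rho)).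
apply: eq_bigr => k _; rewrite [RHS]big_mkcond; apply: eq_bigr => l _.
by case: ifP => // _; rewrite -liftE /pair_term /= !lift_perm_lift.
Qed.

Lemma alt_pair_sum_last (X : 'I_n.+1 -> F) :
  g j (X ord_max) = 0 ->
  alt_pair_sum f g h X =
  (-1) ^+ n * (-1) ^+ j * (\prod_(q < n) f j (X (lift ord_max q))) *
  (\prod_(a < n) (g (lift j a) (X ord_max) / h j (lift j a))) *
  alt_pair_sum fj gj hj (fun q => X (lift ord_max q)).
Proof.
move=> g0; rewrite /alt_pair_sum (bigID (fun sg : 'S_n.+1 => sg ord_max == j)) /=.
rewrite [X in _ + X]big1 ?addr0 => [|sg sgn]; last first.
  by rewrite pair_prod_last_eq0 ?mulr0.
rewrite big_perm_lift big_distrr /=; apply: eq_bigr => rho _.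
rewrite pair_prod_lift_last odd_lift_perm 2!signr_addb !signr_odd.
move: ((-1) ^+ n) ((-1) ^+ j) ((-1) ^+ rho) (\prod_(q < n) _) (\prod_(a < n) _).
by move: (pair_prod _ _ _ _ rho) => P sn sj sr A B; ring.
Qed.

End AltPairSumExpansion.

Lemma big_ord_neq (T : Type) (idx : T) (op : Monoid.com_law idx) n (i : nat)
    (j : 'I_n.+1) (F : 'I_n.+1 -> T) :
  i = j -> \big[op/idx]_(a < n.+1 | a != i :> nat) F a = \big[op/idx]_(a < n) F (lift j a).
Proof.
move->; rewrite big_mkcond (bigD1_ord j) //= eqxx Monoid.mul1m.
by apply: eq_bigr => a _; rewrite -[_ != _]/(lift j a != j) eq_sym neq_lift.
Qed.

Lemma prod_sign_lt (F : pzRingType) n j : (j <= n)%N ->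
  \prod_(a < n) (if (a < j)%N then -1 else 1) = (-1) ^+ j :> F.
Proof.
by move=> jn; rewrite -big_mkcond (big_ord_narrow jn) prodr_const card_ord.
Qed.

Lemma bump_ltn j a : (bump j a < j)%N = (a < j)%N.
Proof. by rewrite ltnNge leq_bump /unbump ltnn subn0 -ltnNge. Qed.

Definition swap_adj (T : Type) k (xi : nat -> T) a :=
  if a == k then xi k.+1 else if a == k.+1 then xi k else xi a.

Section SwapAdj.
Variables (T : Type) (k : nat).

Lemma swap_adjK : involutive (@swap_adj T k).
Proof.
move=> xi; apply: funext => a; rewrite /swap_adj.
case: (a =P k) => [->|_]; first by rewrite (_ : (k.+1 == k) = false) ?eqxx //; lia.
by case: (a =P k.+1) => [->|_]; rewrite ?eqxx.
Qed.

Lemma big_swap_adj (U : Type) (idx : U) (op : Monoid.com_law idx) m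
    (xi : nat -> T) (F : T -> U) :
  (k.+1 < m)%N ->
  \big[op/idx]_(a < m | a != k :> nat) F (swap_adj k xi a) =
  \big[op/idx]_(a < m | a != k.+1 :> nat) F (xi a).
Proof.
move=> km; have k_lt : (k < m)%N by lia.
pose i0 := Ordinal k_lt; pose i1 := Ordinal km.
rewrite [RHS](reindex_inj (@perm_inj _ (tperm i0 i1))).
apply: eq_big => a; rewrite tperm_adj_val //= /swap_adj.
  by case: (nat_of_ord a =P k) => ?; case: (nat_of_ord a =P k.+1) => ? //=; lia.
by case: eqP => // _; case: eqP.
Qed.

End SwapAdj.

Section GsExpansion.
Variables (R : realType) (zeta : R).
Local Notation C := R[i].
Local Notation iz := (izeta zeta).
Local Notation eps := (@eps R).

Definition sh_plus s (lam : nat -> C) a x := csinh (lam a - x + eps s a * iz).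
Definition sh_minus s (lam : nat -> C) a y := csinh (lam a - y - eps s a * iz).
Definition sh_lam s (lam : nat -> C) b a :=
  csinh (lam b - lam a + (eps s b + eps s a) * iz).

Definition Gsum s m (lam xi : nat -> C) :=
  alt_pair_sum (sh_plus s lam) (sh_minus s lam) (sh_lam s lam) (fun k : 'I_m => xi k).

Definition norm_factor s (lam : nat -> C) k j :=
  csinh (lam j - lam k + (eps s j + eps s k) * iz) *
  csinh (lam j - lam k - (eps s j + eps s k) * iz) / csinh (lam j - lam k).

Definition norm_prod s m (lam : nat -> C) :=
  \prod_(k < m) \prod_(j < m | (k < j)%N) norm_factor s lam k j.

Lemma tGsE s m lam xi : tGs zeta s m lam xi = Gsum s m lam xi * norm_prod s m lam.
Proof.
rewrite /tGs /Gs mulrA mulfV ?mul1r //.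
by rewrite pnatr_eq0 muln_eq0 negb_or -!lt0n !fact_gt0.
Qed.

Lemma sh_exchange s lam a b x y : sh_lam s lam a b != 0 ->
  (sh_plus s lam a x * sh_minus s lam b y - sh_plus s lam a y * sh_minus s lam b x)
    / sh_lam s lam a b = csinh (x - y).
Proof.
move=> nz; apply: (mulIf nz); rewrite divfK // [RHS]mulrC /sh_lam.
have -> : lam a - lam b + (eps s a + eps s b) * iz
          = (lam a + eps s a * iz) - (lam b - eps s b * iz) by ring.
rewrite -(csinh_exchange (lam a + eps s a * iz) (lam b - eps s b * iz)) /sh_plus /sh_minus.
by congr (csinh _ * csinh _ - csinh _ * csinh _); ring.
Qed.

Section GenericData.
Variables (s m : nat) (lam : nat -> C) (a b : 'I_m).
Hypotheses (gen : generic zeta s m lam) (ab : a != b).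

Let ab_val : (a : nat) <> b.
Proof. by move/val_inj/eqP; apply/negP. Qed.

Lemma generic_sub_neq0 : csinh (lam a - lam b) != 0.
Proof. by apply/eqP; apply: (gen (ltn_ord a) (ltn_ord b) ab_val).1. Qed.

Lemma generic_sh_lam_neq0 : sh_lam s lam a b != 0.
Proof. by apply/eqP; apply: (gen (ltn_ord a) (ltn_ord b) ab_val).2. Qed.

End GenericData.

Lemma tGs_swap_adj s m lam xi k : generic zeta s m lam -> (k.+1 < m)%N ->
  tGs zeta s m lam (swap_adj k xi) = tGs zeta s m lam xi.
Proof.
move=> gen km; rewrite !tGsE; congr (_ * _).
have k_lt : (k < m)%N by lia.
pose i0 := Ordinal k_lt; pose i1 := Ordinal km.
rewrite /Gsum [RHS](@alt_pair_sum_tperm _ _ _ _ _ i0 i1) => // [|x y a b ab].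
  congr alt_pair_sum; apply: funext => a /=.
  by rewrite tperm_adj_val //= /swap_adj; case: eqP => // _; case: eqP.
by rewrite !sh_exchange ?generic_sh_lam_neq0 // eq_sym.
Qed.

Lemma hat_bump j (f : nat -> C) x : hat j f x = f (bump j x).
Proof. by rewrite /hat /bump; case: ltnP => /=; rewrite ?add0n ?add1n. Qed.

Lemma hat_swap_adj k (xi : nat -> C) : hat k (swap_adj k xi) = hat k.+1 xi.
Proof.
apply: funext => a; rewrite /hat /swap_adj.
by do ! (case: ifP => ? /=); try (congr xi; lia); lia.
Qed.

Lemma eps_bump_ge s j : (s <= j)%N -> forall x, eps s (bump j x) = eps s x.
Proof.
move=> sj x; rewrite /Defs.eps /bump; congr (if _ then _ else _).
by case: leqP => /= jx; apply/idP/idP; lia.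
Qed.

Lemma eps_bump_lt s j : (j < s)%N -> forall x, eps s (bump j x) = eps s.-1 x.
Proof.
move=> js x; rewrite /Defs.eps /bump; congr (if _ then _ else _).
by case: leqP => /= jx; apply/idP/idP; lia.
Qed.

Section Reduction.
Variables (s s' n : nat) (j : 'I_n.+1).
Hypothesis eps_bump : forall x, eps s (bump j x) = eps s' x.

Lemma alt_pair_sum_hat lam (X : 'I_n -> C) :
  alt_pair_sum (fun a => sh_plus s lam (bump j a)) (fun a => sh_minus s lam (bump j a))
    (fun a b => sh_lam s lam (bump j a) (bump j b)) X =
  alt_pair_sum (sh_plus s' (hat j lam)) (sh_minus s' (hat j lam)) (sh_lam s' (hat j lam)) X.
Proof.
congr alt_pair_sum; do 2!apply: funext => ? /=;
  by rewrite /sh_plus /sh_minus /sh_lam !hat_bump !eps_bump.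
Qed.

Lemma norm_prod_split lam :
  norm_prod s n.+1 lam =
  (\prod_(a < n) (if (a < j)%N then norm_factor s lam (lift j a) j
                  else norm_factor s lam j (lift j a))) * norm_prod s' n (hat j lam).
Proof.
rewrite /norm_prod.
under eq_bigr => k _ do rewrite big_mkcond /=.
rewrite (bigD1_ord j) //= (bigD1_ord j) //= ltnn mul1r.
under [X in _ * X]eq_bigr => k _ do rewrite (bigD1_ord j) //=.
rewrite big_split /= mulrA -big_split /=; congr (_ * _).
  apply: eq_bigr => a _; rewrite -[(a < j)%N]bump_ltn.
  have := neq_lift j a; rewrite -val_eqE /=.
  by case: ltngtP => //= _ _; rewrite ?mulr1 ?mul1r.
apply: eq_bigr => k _; rewrite [RHS]big_mkcond; apply: eq_bigr => l _.
rewrite (_ : (lift j k < lift j l)%N = (k < l)%N); last first.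
  by rewrite /= !ltnNge leq_bump2.
by case: ifP => // _; rewrite /norm_factor !hat_bump -!eps_bump.
Qed.

End Reduction.

Lemma Gsum_first s n (j : 'I_n.+1) (lam xi : nat -> C) :
  (s <= j)%N -> lam j = xi 0%N - iz / 2 ->
  Gsum s n.+1 lam xi =
  (-1) ^+ j * (\prod_(q < n) sh_minus s lam j (xi q.+1)) *
  (\prod_(a < n) (sh_plus s lam (lift j a) (xi 0%N) / sh_lam s lam (lift j a) j)) *
  Gsum s n (hat j lam) (hat 0 xi).
Proof.
move=> sj lamj; rewrite /Gsum (@alt_pair_sum_first _ _ _ _ _ j); last first.
  by rewrite /sh_plus lamj /Defs.eps ltnNge sj /= -csinh0; congr csinh; ring.
by rewrite (alt_pair_sum_hat (eps_bump_ge sj)).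
Qed.

Lemma Gsum_last s n (j : 'I_n.+1) (lam xi : nat -> C) :
  (j < s)%N -> lam j = xi n - iz / 2 ->
  Gsum s n.+1 lam xi =
  (-1) ^+ n * (-1) ^+ j * (\prod_(q < n) sh_plus s lam j (xi q)) *
  (\prod_(a < n) (sh_minus s lam (lift j a) (xi n) / sh_lam s lam j (lift j a))) *
  Gsum s.-1 n (hat j lam) (hat n xi).
Proof.
move=> js lamj; rewrite /Gsum (@alt_pair_sum_last _ _ _ _ _ j); last first.
  by rewrite /sh_minus lamj /Defs.eps js /= -csinh0; congr csinh; ring.
rewrite (alt_pair_sum_hat (eps_bump_lt js)).
rewrite (eq_bigr (fun q : 'I_n => sh_plus s lam j (xi q))) => [|q _]; last first.
  by rewrite lift_max.
have -> : (fun q : 'I_n => xi (lift ord_max q)) = (fun q : 'I_n => hat n xi q).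
  by apply: funext => q; rewrite hat_bump.
by [].
Qed.

End GsExpansion.

Arguments eps_bump_ge {R s j}.
Arguments eps_bump_lt {R s j}.

Section RowExpansion.
Variables (R : realType) (zeta : R) (s s' n : nat) (j : 'I_n.+1) (lam : nat -> R[i]).
Local Notation iz := (izeta zeta).

Definition row_expansion (xi : nat -> R[i]) (k : nat) : Prop :=
  tGs zeta s n.+1 lam xi =
  (\prod_(a < n.+1 | a != k :> nat) csinh (lam j - xi a - iz / 2)) *
  (\prod_(a < n.+1 | a != j :> nat) csinh (lam a - xi k - iz / 2)) *
  tGs zeta s' n (hat j lam) (hat k xi).

Lemma row_expansion_swap_adj xi k : generic zeta s n.+1 lam -> (k.+1 < n.+1)%N ->
  row_expansion (swap_adj k xi) k = row_expansion xi k.+1.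
Proof.
move=> gen kn; rewrite /row_expansion tGs_swap_adj //.
rewrite (big_swap_adj _ _ (fun x => csinh (lam j - x - iz / 2))) //.
by rewrite hat_swap_adj /swap_adj eqxx.
Qed.

End RowExpansion.

Section BaseCases.
Variables (R : realType) (zeta : R).
Local Notation C := R[i].
Local Notation iz := (izeta zeta).
Local Notation eps := (@eps R).

Lemma eps_cases s a : eps s a = 1 / 2 \/ eps s a = - (1 / 2).
Proof. by rewrite /Defs.eps; case: ifP; [right | left]. Qed.

Lemma norm_factorC s lam k l : norm_factor zeta s lam k l = - norm_factor zeta s lam l k.
Proof.
rewrite /norm_factor.
have -> : lam l - lam k + (eps s l + eps s k) * iz
  = - (lam k - lam l - (eps s k + eps s l) * iz) by ring.
have -> : lam l - lam k - (eps s l + eps s k) * iz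
  = - (lam k - lam l + (eps s k + eps s l) * iz) by ring.
have -> : lam l - lam k = - (lam k - lam l) by ring.
by rewrite !csinhN mulrNN invrN mulrN [csinh _ * _]mulrC.
Qed.

Lemma row_factor_first s (lam : nat -> C) j a x :
  eps s j = 1 / 2 -> lam j = x - iz / 2 ->
  csinh (lam a - lam j) != 0 -> sh_lam zeta s lam a j != 0 ->
  sh_plus zeta s lam a x / sh_lam zeta s lam a j * norm_factor zeta s lam j a =
  csinh (lam a - x - iz / 2).
Proof.
move=> ej lamj u0; rewrite /norm_factor -/(sh_lam zeta s lam a j).
move: (sh_lam zeta s lam a j) => D D0; rewrite /sh_plus.
case: (eps_cases s a) => ea; rewrite ea ej.
- have -> : lam a - x + 1 / 2 * iz = lam a - lam j by rewrite lamj; ring.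
  have -> : lam a - lam j - (1 / 2 + 1 / 2) * iz = lam a - x - iz / 2.
    by rewrite lamj; ring.
  by field; rewrite u0 D0.
- have -> : lam a - x + - (1 / 2) * iz = lam a - x - iz / 2 by ring.
  have -> : lam a - lam j - (- (1 / 2) + 1 / 2) * iz = lam a - lam j by ring.
  by field; rewrite u0 D0.
Qed.

Lemma row_factor_last s (lam : nat -> C) j a x :
  eps s j = - (1 / 2) -> lam j = x - iz / 2 ->
  csinh (lam a - lam j) != 0 -> sh_lam zeta s lam j a != 0 ->
  sh_minus zeta s lam a x / sh_lam zeta s lam j a * norm_factor zeta s lam j a =
  - csinh (lam a - x - iz / 2).
Proof.
move=> ej lamj u0; rewrite /sh_minus /sh_lam /norm_factor ej.
case: (eps_cases s a) => ea; rewrite ea.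
- have -> : lam j - lam a + (- (1 / 2) + 1 / 2) * iz = - (lam a - lam j) by ring.
  have -> : lam a - x - 1 / 2 * iz = lam a - x - iz / 2 by ring.
  have -> : lam a - lam j + (1 / 2 + - (1 / 2)) * iz = lam a - lam j by ring.
  have -> : lam a - lam j - (1 / 2 + - (1 / 2)) * iz = lam a - lam j by ring.
  rewrite csinhN oppr_eq0 => _.
  by field; rewrite u0.
- have -> : lam j - lam a + (- (1 / 2) + - (1 / 2)) * iz = - (lam a - lam j + iz) by field.
  have -> : lam a - x - - (1 / 2) * iz = lam a - lam j by rewrite lamj; field.
  have -> : lam a - lam j + (- (1 / 2) + - (1 / 2)) * iz = lam a - x - iz / 2.
    by rewrite lamj; field.
  have -> : lam a - lam j - (- (1 / 2) + - (1 / 2)) * iz = lam a - lam j + iz by field.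
  rewrite csinhN oppr_eq0 => D0.
  by field; rewrite u0 D0.
Qed.

Lemma sign_sq (k : nat) : (-1) ^+ k * (-1) ^+ k = 1 :> C.
Proof. by rewrite -expr2 sqrr_sign. Qed.

Lemma row_expansion_first s n (j : 'I_n.+1) (lam xi : nat -> C) :
  (s <= j)%N -> lam j = xi 0%N - iz / 2 -> generic zeta s n.+1 lam ->
  row_expansion zeta s s j lam xi 0.
Proof.
move=> sj lamj gen; have ej : eps s j = 1 / 2 by rewrite /Defs.eps ltnNge sj.
rewrite /row_expansion !tGsE (Gsum_first sj lamj) (norm_prod_split zeta (eps_bump_ge sj)).
rewrite (big_ord_neq _ (j := ord0)) // (big_ord_neq _ (j := j)) //.
set P1 := \prod_(q < n) sh_minus _ _ _ _ _.
set Pw := \prod_(a < n) (sh_plus _ _ _ _ _ / _).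
set Pv := \prod_(a < n) (if _ then _ else _).
set S := Gsum _ _ _ _ _; set U := norm_prod _ _ _ _.
have row : Pw * Pv = (-1) ^+ j * \prod_(a < n) csinh (lam (lift j a) - xi 0%N - iz / 2).
  rewrite -big_split -(prod_sign_lt _ (leq_ord j)) -big_split; apply: eq_bigr => a _ /=.
  have aj : lift j a != j by rewrite eq_sym neq_lift.
  have u0 := generic_sub_neq0 gen aj; have D0 := generic_sh_lam_neq0 gen aj.
  case: ifP => _.
    by rewrite norm_factorC mulrN row_factor_first // mulN1r.
  by rewrite row_factor_first // mul1r.
transitivity ((-1) ^+ j * P1 * (Pw * Pv) * (S * U)); first by rewrite /P1; ring.
have col : P1 = \prod_(q < n) csinh (lam j - xi (lift ord0 q) - iz / 2).
  by apply: eq_bigr => q _; rewrite /sh_minus ej; congr csinh; ring.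
rewrite row col /=; have := sign_sq j; move: ((-1) ^+ j) => sg sg2.
move: (\prod_(q < n) _) (\prod_(a < n) _) (S * U) => A B SU.
by rewrite -[RHS]mul1r -sg2; ring.
Qed.

Lemma row_expansion_last s n (j : 'I_n.+1) (lam xi : nat -> C) :
  (j < s)%N -> lam j = xi n - iz / 2 -> generic zeta s n.+1 lam ->
  row_expansion zeta s s.-1 j lam xi n.
Proof.
move=> js lamj gen; have ej : eps s j = - (1 / 2) by rewrite /Defs.eps js.
rewrite /row_expansion !tGsE (Gsum_last js lamj) (norm_prod_split zeta (eps_bump_lt js)).
rewrite (big_ord_neq _ (j := ord_max)) // (big_ord_neq _ (j := j)) //.
set P1 := \prod_(q < n) sh_plus _ _ _ _ _.
set Pw := \prod_(a < n) (sh_minus _ _ _ _ _ / _).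
set Pv := \prod_(a < n) (if _ then _ else _).
set S := Gsum _ _ _ _ _; set U := norm_prod _ _ _ _.
have row : Pw * Pv =
    (-1) ^+ n * (-1) ^+ j * \prod_(a < n) csinh (lam (lift j a) - xi n - iz / 2).
  have -> : (-1) ^+ n = \prod_(a < n) (-1 : C) by rewrite prodr_const card_ord.
  rewrite -(prod_sign_lt _ (leq_ord j)) -!big_split.
  apply: eq_bigr => a _ /=.
  have aj : lift j a != j by rewrite eq_sym neq_lift.
  have u0 := generic_sub_neq0 gen aj; have D0 := generic_sh_lam_neq0 gen (neq_lift j a).
  case: ifP => _.
    by rewrite norm_factorC mulrN row_factor_last // opprK mulrNN !mul1r.
  by rewrite row_factor_last // mulr1 mulN1r.
have col : P1 = \prod_(q < n) csinh (lam j - xi (lift ord_max q) - iz / 2).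
  by apply: eq_bigr => q _; rewrite /sh_plus ej lift_max; congr csinh; field.
transitivity ((-1) ^+ n * (-1) ^+ j * P1 * (Pw * Pv) * (S * U)); first by rewrite /P1; ring.
rewrite row col /=; have := sign_sq j; have := sign_sq n.
move: ((-1) ^+ j) ((-1) ^+ n) => sj sn sn2 sj2.
move: (\prod_(q < n) _) (\prod_(a < n) _) (S * U) => A B SU.
by rewrite -[RHS]mul1r -sn2 -[RHS]mul1r -sj2; ring.
Qed.

End BaseCases.


Lemma row_expansion_plus (R : realType) (zeta : R) s n (j : 'I_n.+1) lam xi k :
  (s <= j)%N -> generic zeta s n.+1 lam -> (k < n.+1)%N -> lam j = xi k - izeta zeta / 2 ->
  row_expansion zeta s s j lam xi k.
Proof.
move=> sj gen; elim: k xi => [|k IH] xi kn lamj; first exact: row_expansion_first.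
rewrite -row_expansion_swap_adj //; apply: IH; first by lia.
by rewrite /swap_adj eqxx.
Qed.

Lemma row_expansion_minus (R : realType) (zeta : R) s n (j : 'I_n.+1) lam xi k :
  (j < s)%N -> generic zeta s n.+1 lam -> (k < n.+1)%N -> lam j = xi k - izeta zeta / 2 ->
  row_expansion zeta s s.-1 j lam xi k.
Proof.
move=> js gen kn; have [d kd] : exists d, (k + d)%N = n by exists (n - k)%N; lia.
elim: d k xi kn kd => [|d IH] k xi kn kd lamj.
  by move: lamj; rewrite addn0 in kd; rewrite kd => lamj; exact: row_expansion_last.
rewrite -[xi](swap_adjK k) row_expansion_swap_adj //; last by lia.
apply: IH; [lia | lia | rewrite /swap_adj eqxx].
by rewrite (_ : (k.+1 == k) = false) //; lia.
Qed.

Unset Implicit Arguments.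

Theorem lemma3p4 (R : realType) (zeta : R) (m s j k : nat)
  (lam xi : nat -> R[i]) :
  0 < zeta < pi ->
  (2 <= m)%N -> (s <= m)%N -> (j < m)%N -> (k < m)%N ->
  lam j = xi k - izeta zeta / 2 ->
  generic zeta s m lam ->
  ((s <= j)%N ->
    tGs zeta s m lam xi =
      (\prod_(a < m | a != k :> nat) csinh (lam j - xi a - izeta zeta / 2)) *
      (\prod_(a < m | a != j :> nat) csinh (lam a - xi k - izeta zeta / 2)) *
      tGs zeta s m.-1 (hat j lam) (hat k xi)) /\
  ((j < s)%N ->
    tGs zeta s m lam xi =
      (\prod_(a < m | a != k :> nat) csinh (lam j - xi a - izeta zeta / 2)) *
      (\prod_(a < m | a != j :> nat) csinh (lam a - xi k - izeta zeta / 2)) *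
      tGs zeta s.-1 m.-1 (hat j lam) (hat k xi)).
Proof.
move=> _ m_ge2 _ jm km lamj gen.
case: m m_ge2 jm km gen => [//|n] _ jm km gen.
split=> [sj | js].
- exact: (@row_expansion_plus _ _ _ _ (Ordinal jm)).
- exact: (@row_expansion_minus _ _ _ _ (Ordinal jm)).
Qed.
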